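(* Let $p_*$ be a probability density on $\mathbb{R}^d$, let $L>0$, and set $S=\frac12\log\frac{2L+1}{2L}$. Let $K\in\mathbb{N}_+$, let $\eta>0$ be such that $R=S/\eta$ is a positive integer, and consider the Ornstein–Uhlenbeck process $\mathrm{d}\mathbf{x}_t=-\mathbf{x}_t\,\mathrm{d}t+\sqrt{2}\,\mathrm{d}B_t$, $\mathbf{x}_0\sim p_*$, with $p_{k,t}$ the density of $\mathbf{x}_{kS+t}$. Assume that for every $k\in\{0,\dots,K-1\}$ and $t\in[0,S]$, $\nabla\log p_{k,t}$ is $L$-Lipschitz. For $k\in\{0,\dots,K-1\}$, $r\in\{0,\dots,R-1\}$ and $\mathbf{x}\in\mathbb{R}^d$ define the density $$q_{k,S-r\eta}(\mathbf{x}'|\mathbf{x})\propto\exp\Big(\log p_{k,0}(\mathbf{x}')-\frac{\|\mathbf{x}-e^{-(S-r\eta)}\mathbf{x}'\|^2}{2(1-e^{-2(S-r\eta)})}\Big),$$ and set $\mu_r=\frac12\cdot\frac{e^{-2(S-r\eta)}}{1-e^{-2(S-r\eta)}}$, $L_r=\frac32\cdot\frac{e^{-2(S-r\eta)}}{1-e^{-2(S-r\eta)}}$. Then $\mu_r I\preceq-\nabla^2_{\mathbf{x}'}\log q_{k,S-r\eta}(\mathbf{x}'|\mathbf{x})\preceq L_r I$. *)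

From HB Require Import structures.
From mathcomp Require Import all_boot all_order all_algebra.
From mathcomp Require Import all_classical all_reals all_analysis.
Set Implicit Arguments. Unset Strict Implicit. Unset Printing Implicit Defensive.
Import Order.TTheory GRing.Theory Num.Theory.
Import numFieldNormedType.Exports.
Local Open Scope classical_set_scope.
Local Open Scope ring_scope.

Section Defs.
Variable R : realType.

Definition vec_of_tuple (d : nat) (t : d.-tuple R) : 'rV[R]_d :=
  \row_i tnth t i.

(* Lebesgue integral over R^n of a (nonnegative, measurable) function,
   computed as an iterated integral of 1-dimensional Lebesgue integrals
   (equal to the integral against the n-fold product Lebesgue measure
   by Tonelli's theorem). *)
Fixpoint iint (n : nat) : (n.-tuple R -> \bar R) -> \bar R :=
  match n return (n.-tuple R -> \bar R) -> \bar R with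
  | 0 => fun f => f [tuple]
  | n'.+1 => fun f =>
      (\int[@lebesgue_measure R]_(x in [set: R])
         iint (fun t : n'.-tuple R => f [tuple of x :: t]))%E
  end.

Definition integral_Rd (d : nat) (f : 'rV[R]_d -> \bar R) : \bar R :=
  iint (fun t : d.-tuple R => f (vec_of_tuple t)).

Definition enorm2 (d : nat) (v : 'rV[R]_d) : R := \sum_i (v 0 i) ^+ 2.
Definition enorm (d : nat) (v : 'rV[R]_d) : R := Num.sqrt (enorm2 v).

Definition is_prob_density (d : nat) (p : 'rV[R]_d -> R) : Prop :=
  [/\ forall x, 0 <= p x,
      measurable_fun [set: d.-tuple R] (fun t => p (vec_of_tuple t)) &
      integral_Rd (fun x => (p x)%:E) = 1%E].

Definition gauss_density (d : nat) (s2 : R) (z : 'rV[R]_d) : R :=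
  (2 * pi * s2) `^ (- (d%:R / 2)) * expR (- enorm2 z / (2 * s2)).

(* Density of x_s, where dx_t = -x_t dt + sqrt 2 dB_t and x_0 ~ p.
   Since x_s = e^{-s} x_0 + sqrt(1 - e^{-2s}) Z with Z ~ N(0,I) independent
   of x_0, this density is the following convolution (for s > 0). *)
Definition ou_density (d : nat) (p : 'rV[R]_d -> R) (s : R) (y : 'rV[R]_d) : R :=
  if s == 0 then p y else
  fine (integral_Rd (fun x =>
          (p x * gauss_density (1 - expR (- (2 * s))) (y - expR (- s) *: x))%:E)).

Definition evec (d : nat) (i : 'I_d) : 'rV[R]_d := delta_mx 0 i.

Definition grad (d : nat) (f : 'rV[R]_d -> R) (x : 'rV[R]_d) : 'rV[R]_d :=
  \row_i derive f x (evec i).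

Definition hessian (d : nat) (f : 'rV[R]_d -> R) (x : 'rV[R]_d) : 'M[R]_d :=
  \matrix_(i, j) derive (fun y => derive f y (evec j)) x (evec i).

Definition quad_form (d : nat) (A : 'M[R]_d) (v : 'rV[R]_d) : R :=
  \sum_i \sum_j v 0 i * A i j * v 0 j.

Definition loewner_le (d : nat) (A B : 'M[R]_d) : Prop :=
  forall v : 'rV[R]_d, quad_form A v <= quad_form B v.

Definition grad_log_lipschitz (d : nat) (f : 'rV[R]_d -> R) (L : R) : Prop :=
  (forall x, 0 < f x) /\
  (forall x, differentiable (fun y => ln (f y)) x) /\
  (forall x y, enorm (grad (fun z => ln (f z)) x - grad (fun z => ln (f z)) y)
                 <= L * enorm (x - y)).

Definition q_unnorm (d : nat) (p0 : 'rV[R]_d -> R) (tau : R)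
    (x x' : 'rV[R]_d) : R :=
  expR (ln (p0 x') - enorm2 (x - expR (- tau) *: x') / (2 * (1 - expR (- (2 * tau))))).

Definition q_cond (d : nat) (p0 : 'rV[R]_d -> R) (tau : R)
    (x x' : 'rV[R]_d) : R :=
  q_unnorm p0 tau x x' / fine (integral_Rd (fun y => (q_unnorm p0 tau x y)%:E)).

End Defs.

From HB Require Import structures.
From mathcomp Require Import all_boot all_order all_algebra.
From mathcomp Require Import all_classical all_reals all_analysis.
From mathcomp Require Import ring lra.
Import Order.TTheory GRing.Theory Num.Theory.
Import numFieldNormedType.Exports.
Set Implicit Arguments. Unset Strict Implicit. Unset Printing Implicit Defensive.
Local Open Scope ring_scope.

(* Writing a = e^-tau, ln q(.|x) = ln p_{k,0} - |x - a x'|^2 / (2 (1 - a^2)) - ln Z,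
   so -Hess ln q = -Hess ln p_{k,0} + c I with c = e^-2tau / (1 - e^-2tau).
   As grad ln p_{k,0} is L-Lipschitz, the difference quotients of its gradient
   (hence its Hessian, wherever it exists) are bounded by L in operator norm, giving
   (c - L) I <= -Hess ln q <= (c + L) I; and tau <= S means exactly c >= 2L, so
   c - L >= c/2 and c + L <= 3c/2.
   The analytic work is to show that the normaliser Z is finite and positive
   (otherwise q is the junk value 0): the Lipschitz gradient gives a quadratic
   Taylor bound with curvature 3L/4 < a^2 / (2 (1 - a^2)), so the integrand is
   dominated by a Gaussian, and it is bounded below on the unit cube. *)

Section IteratedIntegral.
Variable R : realType.
Local Open Scope ereal_scope.

Lemma le_integral_setT_ge0 (f g : R -> \bar R) :
  (forall x, 0 <= f x) -> (forall x, f x <= g x) ->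
  \int[@lebesgue_measure R]_(x in [set: R]) f x <=
  \int[@lebesgue_measure R]_(x in [set: R]) g x.
Proof.
move=> f0 fg; have g0 x : 0 <= g x by exact: le_trans (f0 x) (fg x).
rewrite !ge0_integralTE//; apply: ereal_sup_le => _ [h hf <-].
by exists h => // x; exact: le_trans (hf x) (fg x).
Qed.

Lemma iint_ge0 n (f : n.-tuple R -> \bar R) : (forall t, 0 <= f t) -> 0 <= iint f.
Proof.
elim: n f => [|n IH] f f0 /=; first exact: f0.
by apply: integral_ge0 => x _; apply: IH => t; exact: f0.
Qed.

Lemma le_iint n (f g : n.-tuple R -> \bar R) :
  (forall t, 0 <= f t) -> (forall t, f t <= g t) -> iint f <= iint g.
Proof.
elim: n f g => [|n IH] f g f0 fg /=; first exact: fg.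
apply: le_integral_setT_ge0 => x; first by apply: iint_ge0 => t; exact: f0.
by apply: IH => t; [exact: f0|exact: fg].
Qed.

Lemma iint_normal_prod n (s C : R) :
  iint (fun t : n.-tuple R => (C * \prod_(y <- t) normal_pdf 0 s y)%:E) = C%:E.
Proof.
elim: n C => [|n IH] C /=; first by rewrite big_nil mulr1.
transitivity (\int[@lebesgue_measure R]_(x in [set: R])
                (C%:E * (normal_pdf 0 s x)%:E)).
  apply: eq_integral => x _; rewrite -EFinM -IH; congr iint; apply: funext => t.
  by rewrite big_cons mulrA.
by rewrite integralZl//= ?integral_normal_pdf ?mule1//; exact: integrable_normal_pdf.
Qed.

Lemma iint_ge_cube n (f : n.-tuple R -> \bar R) (c del : R) :
  (0 <= c)%R -> (0 < del)%R -> (forall t, 0 <= f t) ->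
  (forall t : n.-tuple R, (forall i, `|tnth t i| <= del)%R -> c%:E <= f t) ->
  (c * (2 * del) ^+ n)%:E <= iint f.
Proof.
move=> c0 del0; elim: n f => [|n IH] f f0 fc /=.
  by rewrite expr0 mulr1; apply: fc => -[].
have cdel0 : (0 <= c * (2 * del) ^+ n)%R.
  by rewrite mulr_ge0// exprn_ge0// mulr_ge0// ltW.
apply: (@le_trans _ _ (\int[@lebesgue_measure R]_(x in [set: R])
   ((c * (2 * del) ^+ n) * \1_(`[(- del)%R, del]%classic : set R) x)%:E)).
  have /= -> := @integralZl_indic _ _ _ (@lebesgue_measure R) _ measurableT
    (fun=> `[(- del)%R, del]%classic) (c * (2 * del) ^+ n)%R; last 2 first.
  - by rewrite ltNge cdel0.
  - exact: measurable_itv.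
  rewrite integral_indic//= setIT lebesgue_measure_itv/= lte_fin gtrN//.
  by rewrite -EFinD -EFinM lee_fin opprK -mulr2n exprSr mulrA mulr_natl.
apply: le_integral_setT_ge0 => x; first by rewrite lee_fin mulr_ge0// indicE.
rewrite indicE; have [xI|_] := boolP (x \in _); last first.
  by rewrite mulr0; apply: iint_ge0.
rewrite mulr1; apply: IH => [//|t tb]; apply: fc => i.
case: (unliftP ord0 i) => [j ->|->]; first by rewrite tnthS.
by move: xI; rewrite tnth0 inE/= in_itv/= ler_norml.
Qed.

End IteratedIntegral.

Section Euclidean.
Variable R : realType.

Definition lipschitz_grad (n : nat) (f : 'rV[R]_n -> R) (L : R) : Prop :=
  forall z w, enorm (grad f z - grad f w) <= L * enorm (z - w).

Lemma enorm2_ge0 n (u : 'rV[R]_n) : 0 <= enorm2 u.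
Proof. by apply: sumr_ge0 => i _; exact: sqr_ge0. Qed.

Lemma enorm_ge0 n (u : 'rV[R]_n) : 0 <= enorm u.
Proof. exact: sqrtr_ge0. Qed.

Lemma sqr_enorm n (u : 'rV[R]_n) : enorm u ^+ 2 = enorm2 u.
Proof. by rewrite sqr_sqrtr// enorm2_ge0. Qed.

Lemma enorm2Z n (a : R) (u : 'rV[R]_n) : enorm2 (a *: u) = a ^+ 2 * enorm2 u.
Proof. by rewrite /enorm2 mulr_sumr; apply: eq_bigr => i _; rewrite mxE exprMn. Qed.

Lemma enormZ n (a : R) (u : 'rV[R]_n) : enorm (a *: u) = `|a| * enorm u.
Proof. by rewrite /enorm enorm2Z sqrtrM ?sqr_ge0// sqrtr_sqr. Qed.

Lemma enormN n (u : 'rV[R]_n) : enorm (- u) = enorm u.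
Proof. by rewrite -scaleN1r enormZ normrN normr1 mul1r. Qed.

Lemma dot_le_of_enorm_le n (u v : 'rV[R]_n) (M : R) :
  0 < M -> enorm v <= M * enorm u -> \sum_i u 0 i * v 0 i <= M * enorm2 u.
Proof.
move=> M0 vM.
have v2M : enorm2 v <= M ^+ 2 * enorm2 u.
  have := ler_pM (enorm_ge0 v) (enorm_ge0 v) vM vM.
  by rewrite -!expr2 sqr_enorm exprMn sqr_enorm.
have amgm : \sum_i (2 * M) * (u 0 i * v 0 i) <=
            \sum_i (M ^+ 2 * u 0 i ^+ 2 + v 0 i ^+ 2).
  apply: ler_sum => i _; rewrite -subr_ge0.
  by rewrite (_ : _ - _ = (M * u 0 i - v 0 i) ^+ 2) ?sqr_ge0//; ring.
rewrite -mulr_sumr big_split /= -mulr_sumr in amgm.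
move: v2M amgm; rewrite /enorm2.
move: (\sum_i _ * _) (\sum_i u 0 i ^+ 2) (\sum_i v 0 i ^+ 2) => D U V; nra.
Qed.

Lemma abs_dot_le_of_enorm_le n (u v : 'rV[R]_n) (M : R) :
  0 < M -> enorm v <= M * enorm u -> `|\sum_i u 0 i * v 0 i| <= M * enorm2 u.
Proof.
move=> M0 vM; rewrite ler_norml dot_le_of_enorm_le// andbT.
have := @dot_le_of_enorm_le n u (- v) M M0; rewrite enormN => /(_ vM).
by under eq_bigr do rewrite mxE mulrN; rewrite sumrN lerNl.
Qed.

Lemma quad_form_scalar n (m : R) (v : 'rV[R]_n) : quad_form m%:M v = m * enorm2 v.
Proof.
rewrite /quad_form /enorm2 mulr_sumr; apply: eq_bigr => i _.
rewrite (bigD1 i) //= big1 ?addr0 => [|j ji]; rewrite !mxE.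
  by rewrite eqxx mulr1n; ring.
by rewrite eq_sym (negbTE ji) mulr0n mulr0 mul0r.
Qed.

Lemma quad_formN n (A : 'M[R]_n) (v : 'rV[R]_n) : quad_form (- A) v = - quad_form A v.
Proof.
rewrite /quad_form -sumrN; apply: eq_bigr => i _; rewrite -sumrN.
by apply: eq_bigr => j _; rewrite !mxE; ring.
Qed.

End Euclidean.

Section Calculus.
Variable R : realType.
Local Notation vec n := 'rV[R]_n.

Lemma derive_grad n (f : vec n -> R) (z w : vec n) :
  differentiable f z -> derive f z w = \sum_i w 0 i * grad f z 0 i.
Proof.
move=> df; rewrite deriveE // {1}(row_sum_delta w) linear_sum.
by apply: eq_bigr => i _; rewrite linearZ /= -deriveE // mxE.
Qed.

Lemma is_derive_ray n (f : vec n -> R) (y : vec n) (s : R) :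
  differentiable f (s *: y) ->
  is_derive s 1 (fun s => f (s *: y)) (derive f (s *: y) y).
Proof.
move=> df.
have quotE : (fun h : R => h^-1 *: (((fun s => f (s *: y)) \o shift s) (h *: 1)
                                     - f (s *: y)))
           = (fun h : R => h^-1 *: ((f \o shift (s *: y)) (h *: y) - f (s *: y))).
  by apply: funext => h; rewrite /= scalerDl [h *: 1]mulr1.
apply: DeriveDef; first by rewrite /derivable quotE; exact: diff_derivable.
by rewrite /derive quotE.
Qed.

Section LipschitzGradient.
Variables (n : nat) (f : vec n -> R) (L : R).
Hypotheses (L0 : 0 < L) (df : forall z, differentiable f z)
           (lipf : lipschitz_grad f L).

Lemma ray_derive_lipschitz (y : vec n) (s : R) : 0 < s ->
  `|derive f (s *: y) y - derive f 0 y| <= L * s * enorm2 y.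
Proof.
move=> s0; have -> : derive f (s *: y) y - derive f 0 y =
                     \sum_i y 0 i * (grad f (s *: y) - grad f 0) 0 i.
  by rewrite !derive_grad // -sumrB; apply: eq_bigr => i _; rewrite !mxE mulrBr.
apply: abs_dot_le_of_enorm_le; first exact: mulr_gt0.
apply: le_trans (lipf _ _) _.
by rewrite subr0 enormZ gtr0_norm// mulrA.
Qed.

(* Two mean value steps, on [0, 1/2] and [1/2, 1], give the constant 3/4; a
   single step would only give L, too weak for the Gaussian domination of Z. *)
Lemma taylor_lipschitz_grad (y : vec n) :
  `|f y - f 0 - derive f 0 y| <= 3 / 4 * L * enorm2 y.
Proof.
pose g s := f (s *: y); pose D s : R := derive f (s *: y) y.
have gD (s : R) : is_derive s (1 : R) g (D s) by exact: is_derive_ray.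
have gC a b : {within `[a, b], continuous g}%classic.
  by apply: derivable_within_continuous => s _; case: (gD s).
have [c1 /[!in_itv]/= /andP[c1_gt0 c1_lt] g1E] :=
  MVT (a := 0) (b := 1 / 2) ltac:(lra) (fun s _ => gD s) (gC _ _).
have [c2 /[!in_itv]/= /andP[c2_gt c2_lt1] g2E] :=
  MVT (a := 1 / 2) (b := 1) ltac:(lra) (fun s _ => gD s) (gC _ _).
have := ray_derive_lipschitz y c1_gt0.
have := ray_derive_lipschitz y (ltac:(lra) : 0 < c2).
have -> : f y - f 0 - derive f 0 y =
          (g (1 / 2) - g 0) + (g 1 - g (1 / 2)) - derive f 0 y.
  by rewrite /g scale0r scale1r; ring.
rewrite g1E g2E /D !ler_norml.
have y0 := enorm2_ge0 y.
have : L * c1 * enorm2 y <= L * (1 / 2) * enorm2 y.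
  by apply: ler_wpM2r => //; apply: ler_wpM2l; rewrite ltW.
have : L * c2 * enorm2 y <= L * enorm2 y.
  by apply: ler_wpM2r => //; apply: ler_piMr; rewrite ltW.
lra.
Qed.

End LipschitzGradient.

Lemma cvg_affine_dnbhs0 (q : R -> R) (A B : R) :
  (forall h, h != 0 -> q h = A + B * h) -> (q h @[h --> 0^'] --> A)%classic.
Proof.
move=> qE; apply: (@cvg_trans _ ((fun h => A + B * h) @ 0^')%classic).
  apply: near_eq_cvg; near=> h; rewrite qE //.
  by near: h; exact: nbhs_dnbhs_neq.
apply: cvg_within_filter.
have cvgA : ((fun=> A) @ nbhs (0 : R) --> A)%classic by exact: cvg_cst.
have cvgB : ((fun h : R => B * h) @ nbhs (0 : R) --> B * 0)%classic.
  by apply: cvgMr; exact: cvg_id.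
by have := cvgD cvgA cvgB; rewrite mulr0 addr0; exact.
Unshelve. all: by end_near.
Qed.

Lemma is_derive_enorm2_affine n (x : vec n) (a b : R) (y : vec n) (j : 'I_n) :
  is_derive y (evec R j) (fun y => enorm2 (x - a *: y) / b)
    (- 2 * a * (x - a *: y) 0 j / b).
Proof.
have quotE (h : R) : h != 0 ->
    h^-1 *: (((fun y => enorm2 (x - a *: y) / b) \o shift y) (h *: evec R j)
             - enorm2 (x - a *: y) / b)
    = - 2 * a * (x - a *: y) 0 j / b + a ^+ 2 / b * h.
  move=> h0 /=; rewrite -mulrBl.
  have -> : enorm2 (x - a *: (h *: evec R j + y)) - enorm2 (x - a *: y) =
            ((x - a *: y) 0 j - a * h) ^+ 2 - (x - a *: y) 0 j ^+ 2.
    rewrite /enorm2 -sumrB (bigD1 j) //= big1 ?addr0 => [|i ij].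
      by rewrite !mxE !eqxx /= mulr1; ring.
    by rewrite !mxE (negbTE ij) /=; ring.
  rewrite !mxE -[h^-1 *: _]/(h^-1 * _).
  have [->|b0] := eqVneq b 0; first by rewrite !invr0 !mulr0 mul0r addr0.
  by field; rewrite b0 h0.
have cvgq := cvg_affine_dnbhs0 quotE.
by apply: DeriveDef; [apply/cvg_ex; eexists; exact: cvgq|apply: cvg_lim].
Qed.

Lemma grad_sub_enorm2_affine n (f : vec n -> R) (x : vec n) (a b c : R) (z : vec n) :
  (forall j, derivable f z (evec R j)) ->
  grad (fun y => f y - enorm2 (x - a *: y) / b - c) z
  = grad f z + (2 * a / b) *: (x - a *: z).
Proof.
move=> df; apply/rowP => j; rewrite !mxE.
pose G y := enorm2 (x - a *: y) / b.
have [dG DG] := is_derive_enorm2_affine x a b z j.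
rewrite (_ : (fun y => _) = f - G - cst c) // !deriveB ?derive_cst ?DG //.
  by rewrite !mxE; ring.
exact: derivableB.
Qed.

Lemma grad_sub_enorm2_affineB n (f : vec n -> R) (x : vec n) (a b c : R) (z w : vec n) :
  (forall j, derivable f z (evec R j)) -> (forall j, derivable f w (evec R j)) ->
  let h y := f y - enorm2 (x - a *: y) / b - c in
  grad h z - grad h w = grad f z - grad f w - (2 * a ^+ 2 / b) *: (z - w).
Proof.
move=> dfz dfw h; rewrite !grad_sub_enorm2_affine //.
apply/rowP => j; rewrite !mxE; ring.
Qed.

End Calculus.

Section Hessian.
Variable R : realType.
Local Notation vec n := 'rV[R]_n.

Lemma quad_form_hessian_cvg n (h : vec n -> R) (x' v : vec n) :
  differentiable (grad h) x' ->
  ((fun t : R => \sum_j v 0 j * (t^-1 * (grad h (t *: v + x') 0 j - grad h x' 0 j)))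
     @ 0^' --> quad_form (hessian h x') v)%classic.
Proof.
move=> dF; set F := grad h.
have cvgF_coord w j : ((fun t : R => t^-1 * (F (t *: w + x') 0 j - F x' 0 j))
                         @ 0^' --> derive F x' w 0 j)%classic.
  have -> : (fun t : R => t^-1 * (F (t *: w + x') 0 j - F x' 0 j)) =
            (fun M : vec n => M 0 j) \o (fun t : R => t^-1 *: (F (t *: w + x') - F x')).
    by apply: funext => t /=; rewrite !mxE.
  apply: (continuous_cvg _ (@coord_continuous R 1 n 0 j _)).
  exact: (diff_derivable (v := w) dF).
have hessE i j : hessian h x' i j = derive F x' (evec R i) 0 j.
  rewrite mxE (_ : (fun y => derive h y (evec R j)) = (fun y => F y 0 j)).
    exact: cvg_lim (cvgF_coord _ j).
  by apply: funext => y; rewrite /F /grad mxE.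
have DFv : derive F x' v = \sum_i v 0 i *: derive F x' (evec R i).
  rewrite deriveE // {1}(row_sum_delta v) linear_sum; apply: eq_bigr => i _.
  by rewrite linearZ -deriveE.
have -> : quad_form (hessian h x') v = \sum_j v 0 j * derive F x' v 0 j.
  rewrite /quad_form exchange_big /=; apply: eq_bigr => j _.
  rewrite DFv summxE mulr_sumr; apply: eq_bigr => i _.
  by rewrite hessE mxE; ring.
apply: cvg_big => [|j _]; first exact: add_continuous.
by apply: cvgMr; exact: cvgF_coord.
Qed.

Lemma quad_form_hessian_near_scalar n (h f : vec n -> R) (L c : R) (x' v : vec n) :
  0 < L -> lipschitz_grad f L -> differentiable (grad h) x' ->
  (forall z, grad h z - grad h x' = grad f z - grad f x' - c *: (z - x')) ->
  `|quad_form (hessian h x') v + c * enorm2 v| <= L * enorm2 v.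
Proof.
move=> L0 lipf dh hf.
have := quad_form_hessian_cvg (v := v) dh.
set Q := fun t : R => _; move=> cvgQ.
have cvg_abs : (`|Q t + c * enorm2 v| @[t --> 0^']
                --> `|quad_form (hessian h x') v + c * enorm2 v|)%classic.
  by apply: cvg_norm; apply: cvgD => //; exact: cvg_cst.
rewrite -(cvg_lim _ cvg_abs) //; apply: limr_le; first exact: cvgP cvg_abs.
near=> t; have t0 : t != 0 by near: t; exact: nbhs_dnbhs_neq.
have -> : Q t + c * enorm2 v
        = t^-1 * \sum_j v 0 j * (grad f (t *: v + x') - grad f x') 0 j.
  rewrite /enorm2 mulr_sumr mulr_sumr -big_split; apply: eq_bigr => j _ /=.
  have := congr1 (fun M : vec n => M 0 j) (hf (t *: v + x')).
  rewrite !mxE addrK => ->; field; exact: t0.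
have t_gt0 : 0 < `|t| by rewrite normr_gt0.
rewrite normrM normfV ler_pdivrMl // mulrA [`|t| * L]mulrC.
apply: abs_dot_le_of_enorm_le; first exact: mulr_gt0.
by apply: le_trans (lipf _ _) _; rewrite addrK enormZ mulrA.
Unshelve. all: by end_near.
Qed.

End Hessian.

Section Normaliser.
Variable R : realType.
Local Notation vec n := 'rV[R]_n.

(* The exponent of the tilted Gaussian, coordinatewise, after the Taylor bound;
   completing squares keeps the curvature -L/16 that makes it integrable. *)
Lemma coord_exponent_le (B Y X a u L : R) : 0 <= u -> 0 < L -> L <= a ^+ 2 * u ->
  B * Y + 3 / 4 * L * Y ^+ 2 - (X - a * Y) ^+ 2 * u <=
  4 * B ^+ 2 / L + 7 * X ^+ 2 * u - L / 16 * Y ^+ 2.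
Proof.
move=> u0 L0 aLu.
have F1 : 0 <= u * (8 * X - a * Y) ^+ 2 by rewrite mulr_ge0 ?sqr_ge0.
have F2 : 0 <= (a ^+ 2 * u - L) * Y ^+ 2 by rewrite mulr_ge0 ?sqr_ge0 ?subr_ge0.
have F3 : 0 <= 4 * B ^+ 2 / L - B * Y + L / 16 * Y ^+ 2.
  rewrite (_ : _ + _ = L^-1 * (2 * B - L * Y / 4) ^+ 2).
    by rewrite mulr_ge0 ?sqr_ge0 ?invr_ge0 ?ltW.
  by field; rewrite gt_eqF.
nra.
Qed.

Lemma coord_exponent_ge (B Y X a u L : R) : 0 <= u -> 0 <= L -> `|Y| <= 1 ->
  - (B ^+ 2 + 1) / 2 - 3 / 4 * L - (2 * X ^+ 2 + 2 * a ^+ 2) * u <=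
  B * Y - 3 / 4 * L * Y ^+ 2 - (X - a * Y) ^+ 2 * u.
Proof.
move=> u0 L0; rewrite ler_norml => /andP[Y1 Y2].
have Y21 : 0 <= 1 - Y ^+ 2 by rewrite subr_ge0; nra.
have F1 : 0 <= (B + Y) ^+ 2 by exact: sqr_ge0.
have F2 : 0 <= L * (1 - Y ^+ 2) by exact: mulr_ge0.
have F3 : 0 <= u * (X + a * Y) ^+ 2 by rewrite mulr_ge0 ?sqr_ge0.
have F4 : 0 <= u * a ^+ 2 * (1 - Y ^+ 2) by exact/mulr_ge0/Y21/mulr_ge0/sqr_ge0.
nra.
Qed.

Section TiltedGaussian.
Variables (n : nat) (f : vec n -> R) (L a u : R) (x : vec n).
Hypotheses (L0 : 0 < L) (df : forall z, differentiable f z)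
           (lipf : lipschitz_grad f L) (u0 : 0 < u) (aLu : L <= a ^+ 2 * u).

Lemma lipschitz_grad_coord_bounds (y : vec n) :
  `|f y - f 0 - \sum_i grad f 0 0 i * y 0 i| <= \sum_i 3 / 4 * L * y 0 i ^+ 2.
Proof.
rewrite -mulr_sumr; have := taylor_lipschitz_grad L0 df lipf y.
by rewrite derive_grad //; under eq_bigr do rewrite mulrC.
Qed.

Lemma tilt_le_normal_prod : exists s C, forall y : vec n,
  expR (f y - enorm2 (x - a *: y) * u) <= C * \prod_i normal_pdf 0 s (y 0 i).
Proof.
pose s := Num.sqrt (8 / L).
have s2E : s ^+ 2 = 8 / L by rewrite sqr_sqrtr // divr_ge0 // ltW.
have s0 : s != 0 by rewrite sqrtr_eq0 -ltNge divr_gt0.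
pose K := \sum_i (4 * grad f 0 0 i ^+ 2 / L + 7 * x 0 i ^+ 2 * u).
exists s, (expR (f 0 + K) / normal_peak s ^+ n) => y.
have -> : \prod_i normal_pdf 0 s (y 0 i) =
          normal_peak s ^+ n * expR (\sum_i - (L / 16 * y 0 i ^+ 2)).
  rewrite expR_sum normal_pdfE // big_split /= prodr_const card_ord; congr (_ * _).
  apply: eq_bigr => i _; rewrite /normal_fun subr0 s2E; congr expR.
  by field; rewrite gt_eqF.
rewrite mulrA divfK ?expf_neq0 ?gt_eqF ?normal_peak_gt0 // -expRD ler_expR.
have := lipschitz_grad_coord_bounds y; rewrite ler_norml => /andP[_ fub].
have := ler_sum (index_enum 'I_n) (P := xpredT) (fun i _ =>
  coord_exponent_le (grad f 0 0 i) (y 0 i) (x 0 i) (ltW u0) L0 aLu).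
rewrite /K /enorm2 mulr_suml !sumrN !big_split /= !sumrN.
have -> : \sum_i (x - a *: y) 0 i ^+ 2 * u = \sum_i (x 0 i - a * y 0 i) ^+ 2 * u.
  by apply: eq_bigr => i _; rewrite !mxE.
lra.
Qed.

Lemma tilt_ge_on_cube : exists2 c, 0 < c & forall y : vec n,
  (forall i, `|y 0 i| <= 1) -> c <= expR (f y - enorm2 (x - a *: y) * u).
Proof.
pose K := \sum_i (- (grad f 0 0 i ^+ 2 + 1) / 2 - 3 / 4 * L
                  - (2 * x 0 i ^+ 2 + 2 * a ^+ 2) * u).
exists (expR (f 0 + K)) => [|y y_cube]; first exact: expR_gt0.
rewrite ler_expR.
have := lipschitz_grad_coord_bounds y; rewrite ler_norml => /andP[flb _].
have := ler_sum (index_enum 'I_n) (P := xpredT) (fun i _ =>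
  coord_exponent_ge (grad f 0 0 i) (x 0 i) a (ltW u0) (ltW L0) (y_cube i)).
rewrite /K /enorm2 mulr_suml !big_split /= ?sumrN.
have -> : \sum_i (x - a *: y) 0 i ^+ 2 * u = \sum_i (x 0 i - a * y 0 i) ^+ 2 * u.
  by apply: eq_bigr => i _; rewrite !mxE.
lra.
Qed.

Lemma tilt_integral_gt0 :
  0 < fine (integral_Rd (fun y => (expR (f y - enorm2 (x - a *: y) * u))%:E)).
Proof.
have [s [C tilt_ub]] := tilt_le_normal_prod.
have [c c_gt0 tilt_lb] := tilt_ge_on_cube.
rewrite /integral_Rd; set I := iint _.
have I_ub : (I <= C%:E)%E.
  rewrite -(iint_normal_prod n s C); apply: le_iint => t; first by rewrite lee_fin expR_ge0.
  rewrite lee_fin big_tuple; apply: le_trans (tilt_ub _) _.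
  by under eq_bigr do rewrite mxE.
have I_lb : ((c * (2 * 1) ^+ n)%:E <= I)%E.
  apply: iint_ge_cube => [||t|t t_cube]; rewrite ?lee_fin ?expR_ge0 //.
  - exact: ltW.
  - by apply: tilt_lb => i; rewrite mxE.
have : 0 < c * (2 * 1) ^+ n by rewrite mulr_gt0 ?exprn_gt0.
by move: I_ub I_lb; case: I => [r| |] //= _; rewrite lee_fin => /[swap]; exact: lt_le_trans.
Qed.

End TiltedGaussian.

End Normaliser.

Section OrnsteinUhlenbeck.
Variable R : realType.
Local Notation vec n := 'rV[R]_n.

Lemma expR_ratio_ge_twice (L tau : R) : 0 < L -> 0 < tau ->
  tau <= 1 / 2 * ln ((2 * L + 1) / (2 * L)) ->
  2 * L <= expR (- (2 * tau)) / (1 - expR (- (2 * tau))).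
Proof.
move=> L0 tau0 tauS; set E := expR _.
have E1 : E < 1 by rewrite /E expR_lt1; lra.
have : 2 * L / (2 * L + 1) <= E.
  have <- : expR (- (2 * (1 / 2 * ln ((2 * L + 1) / (2 * L))))) = 2 * L / (2 * L + 1).
    rewrite mulrA [2 * _](_ : _ = 1) ?mul1r; last by field.
    rewrite expRN lnK; last first.
      by rewrite posrE divr_gt0 // ?addr_gt0 ?mulr_gt0.
    by rewrite invf_div.
  by rewrite /E ler_expR; lra.
by rewrite ler_pdivrMr ?ler_pdivlMr ?subr_gt0 ?addr_gt0 ?mulr_gt0 //; lra.
Qed.

Lemma ln_q_condE n (P : vec n -> R) (tau : R) (x : vec n) :
  let Z := fine (integral_Rd (fun y => (q_unnorm P tau x y)%:E)) in
  (forall y, 0 < P y) -> 0 < Z ->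
  (fun y => ln (q_cond P tau x y)) =
  (fun y => ln (P y) - enorm2 (x - expR (- tau) *: y) / (2 * (1 - expR (- (2 * tau))))
            - ln Z).
Proof.
move=> Z P_gt0 Z_gt0; apply: funext => y.
rewrite /q_cond -/Z lnM ?posrE ?expR_gt0 ?invr_gt0 //.
by rewrite /q_unnorm expRK lnV ?posrE.
Qed.

Lemma q_unnorm_integral_gt0 n (P : vec n -> R) (L tau : R) (x : vec n) :
  0 < L -> 0 < tau -> 2 * L <= expR (- (2 * tau)) / (1 - expR (- (2 * tau))) ->
  grad_log_lipschitz P L ->
  0 < fine (integral_Rd (fun y => (q_unnorm P tau x y)%:E)).
Proof.
move=> L0 tau0 ratio_ge [_ [dP lipP]].
have E1 : expR (- (2 * tau)) < 1 by rewrite expR_lt1; lra.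
rewrite /q_unnorm; apply: (tilt_integral_gt0 (a := expR (- tau)) x L0 dP lipP).
  by rewrite invr_gt0 mulr_gt0 ?subr_gt0.
by rewrite -expRM_natl mulrN invfM mulrCA; lra.
Qed.

End OrnsteinUhlenbeck.

Theorem lemma10 (R : realType) (d : nat) (pstar : 'rV[R]_d -> R) (L : R)
  (K : nat) (eta : R) (Rn : nat) :
  is_prob_density pstar ->
  0 < L ->
  (0 < K)%N ->
  0 < eta ->
  (0 < Rn)%N ->
  (1 / 2 * ln ((2 * L + 1) / (2 * L))) / eta = Rn%:R ->
  (forall (k : nat) (t : R), (k < K)%N -> 0 <= t ->
     t <= 1 / 2 * ln ((2 * L + 1) / (2 * L)) ->
     grad_log_lipschitz
       (ou_density pstar (k%:R * (1 / 2 * ln ((2 * L + 1) / (2 * L))) + t)) L) ->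
  forall (k r : nat), (k < K)%N -> (r < Rn)%N ->
  let S := 1 / 2 * ln ((2 * L + 1) / (2 * L)) in
  let tau := S - r%:R * eta in
  let mu_r := 1 / 2 * (expR (- (2 * tau)) / (1 - expR (- (2 * tau)))) in
  let L_r := 3 / 2 * (expR (- (2 * tau)) / (1 - expR (- (2 * tau)))) in
  forall x x' : 'rV[R]_d,
    differentiable
      (grad (fun y => ln (q_cond (ou_density pstar (k%:R * S)) tau x y))) x' ->
    loewner_le (mu_r%:M)
      (- hessian (fun y => ln (q_cond (ou_density pstar (k%:R * S)) tau x y)) x')
    /\ loewner_le
      (- hessian (fun y => ln (q_cond (ou_density pstar (k%:R * S)) tau x y)) x')
      (L_r%:M).
Proof.
move=> _ L0 _ eta0 _ SE hlip k r kK rRn S tau mu_r L_r x x' dgrad.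
have tau_gt0 : 0 < tau.
  have S_eq : S = Rn%:R * eta by rewrite -SE divfK ?gt_eqF.
  have : r%:R + 1 <= Rn%:R :> R by rewrite natr1 ler_nat.
  by rewrite /tau S_eq; nra.
have tau_le_S : tau <= S by rewrite /tau gerBl mulr_ge0 ?ler0n ?ltW.
have ratio_ge := expR_ratio_ge_twice L0 tau_gt0 tau_le_S.
have P_lip : grad_log_lipschitz (ou_density pstar (k%:R * S)) L.
  by have := hlip k 0 kK (lexx 0) (ltW (lt_le_trans tau_gt0 tau_le_S)); rewrite addr0.
have Z_gt0 := q_unnorm_integral_gt0 x L0 tau_gt0 ratio_ge P_lip.
case: P_lip => P_gt0 [dP lipP].
rewrite ln_q_condE // in dgrad *.
have hess_bound v := quad_form_hessian_near_scalar v L0 lipP dgrad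
  (fun z => grad_sub_enorm2_affineB x _ _ _ (fun j => diff_derivable (dP z))
                                           (fun j => diff_derivable (dP x'))).
have E_lt1 : expR (- (2 * tau)) < 1 by rewrite expR_lt1; lra.
rewrite (_ : 2 * expR (- tau) ^+ 2 / _ = expR (- (2 * tau)) / (1 - expR (- (2 * tau))))
  in hess_bound; last by rewrite -expRM_natl mulrN; field; rewrite gt_eqF ?subr_gt0.
set c := expR _ / _ in ratio_ge hess_bound.
have c_half_ge (v : 'rV_d) : 0 <= (c / 2 - L) * enorm2 v by rewrite mulr_ge0 ?enorm2_ge0; lra.
split => v; rewrite quad_formN quad_form_scalar /mu_r /L_r -/c;
  have := c_half_ge v; have := hess_bound v; rewrite ler_norml; lra.
Qed.
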